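(* Let $G=(V,E)$ be a finite simple undirected graph, $G_0:=G$, and let $W_1,\dots,W_r$ be distinct subsets of $V$ such that for every $t\in\{1,\dots,r\}$, $W_t$ is a clique of $G_{t-1}$ with $|W_t|\ge2$ and $G_t:=G_{t-1}\mid W_t$. Let $k>0$ and suppose that for all $t\in\{1,\dots,r\}$, $|W_t|=k$ and the subgraph of $G_{t-1}$ induced by $\bigcup_{i=1}^tW_i$ is $k$-partite with vertex classes $V_t^1,\dots,V_t^k$. Then $|W_\ell\cap V_t^i|=1$ for all $t\in\{1,\dots,r\}$, $\ell\in\{1,\dots,t\}$ and $i\in\{1,\dots,k\}$.
   Context: The clique projection of a clique $W$ ($|W|\ge2$) of a graph $H=(V,E_H)$ is $H\mid W=(V,E_H\cup\{uv\notin E_H\mid u\ne v,\ W\subseteq N_H(u)\cup N_H(v)\})$, where $N_H(u)$ is the neighborhood of $u$ in $H$. ''$k$-partite with vertex classes $V_t^1,\dots,V_t^k$'' means these sets partition the vertex set of the induced subgraph and each is a stable set in it. *)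

From mathcomp Require Import all_boot.
Set Implicit Arguments. Unset Strict Implicit. Unset Printing Implicit Defensive.

Section Graphs.
Variable V : finType.

Definition simple_graph (e : rel V) : Prop := irreflexive e /\ symmetric e.

Definition nbhd (e : rel V) (u : V) : {set V} := [set v | e u v].

Definition clique_proj (e : rel V) (W : {set V}) : rel V :=
  fun u v => e u v || ((u != v) && (W \subset nbhd e u :|: nbhd e v)).

Definition is_clique (e : rel V) (W : {set V}) : Prop :=
  forall x y, x \in W -> y \in W -> x != y -> e x y.

(* G_0 := G, G_t := G_{t-1} | W_t  (W indexed from 1) *)
Fixpoint Gseq (e : rel V) (W : nat -> {set V}) (t : nat) : rel V :=
  if t is t'.+1 then clique_proj (Gseq e W t') (W t) else e.

Definition kpartite_classes (e : rel V) (U : {set V}) (k : nat)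
    (C : 'I_k -> {set V}) : Prop :=
  [/\ \bigcup_(i < k) C i = U,
      forall i j : 'I_k, i != j -> [disjoint C i & C j] &
      forall i : 'I_k, forall x y, x \in C i -> y \in C i -> ~~ e x y].

End Graphs.

From mathcomp Require Import all_boot.

(* Clique projection only adds edges, so W_l is still a clique of G_(t-1) for
   l <= t, and a clique meets each stable class V_t^i in at most one vertex.
   The k classes cover the k vertices of W_l, so by pigeonhole none of them
   can miss W_l. *)

Set Implicit Arguments.
Unset Strict Implicit.
Unset Printing Implicit Defensive.

Lemma clique_proj_subrel (V : finType) (e : rel V) (W : {set V}) :
  subrel e (clique_proj e W).
Proof. by move=> x y exy; rewrite /clique_proj exy. Qed.

Lemma Gseq_subrel (V : finType) (G : rel V) (W : nat -> {set V}) a b :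
  a <= b -> subrel (Gseq G W a) (Gseq G W b).
Proof.
elim: b => [|b IHb]; first by rewrite leqn0 => /eqP ->.
rewrite leq_eqVlt => /predU1P [-> //| lt_ab] x y exy.
exact/clique_proj_subrel/IHb.
Qed.

Lemma is_clique_subrel (V : finType) (e e' : rel V) (W : {set V}) :
  subrel e e' -> is_clique e W -> is_clique e' W.
Proof. by move=> ee' clW x y xW yW nxy; apply/ee'/clW. Qed.

Lemma card_clique_stable_le1 (V : finType) (e : rel V) (W S : {set V}) :
  is_clique e W -> (forall x y, x \in S -> y \in S -> ~~ e x y) ->
  #|W :&: S| <= 1.
Proof.
move=> clW stS; apply/card_le1_eqP => x y /setIP [xW xS] /setIP [yW yS].
apply/eqP; apply: contraNT (stS x y xS yS); rewrite eq_sym; exact: clW.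
Qed.

Lemma card_bigcup_le (T I : finType) (F : I -> {set T}) :
  #|\bigcup_i F i| <= \sum_i #|F i|.
Proof.
elim/big_ind2: _ => [|m A n B leAm leBn|//]; first by rewrite cards0.
exact: leq_trans (leq_card_setU A B) (leq_add leAm leBn).
Qed.

Lemma card_le_sum_cover (T I : finType) (A : {set T}) (C : I -> {set T}) :
  A \subset \bigcup_i C i -> #|A| <= \sum_i #|A :&: C i|.
Proof.
move=> /subsetP A_sub; apply: leq_trans (card_bigcup_le _); apply: subset_leq_card.
apply/subsetP => x xA; have /bigcupP [i _ xCi] := A_sub x xA.
by apply/bigcupP; exists i; rewrite ?inE ?xA.
Qed.

Lemma sum_le1_eq1 (I : finType) (F : I -> nat) :
  (forall i, F i <= 1) -> #|I| <= \sum_i F i -> forall i, F i = 1.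
Proof.
move=> F_le1 le_sum i; apply/eqP; rewrite eqn_leq F_le1 lt0n.
apply: contraTneq le_sum => Fi0; rewrite -ltnNge (bigD1 i) //= Fi0 add0n.
apply: (@leq_ltn_trans (\sum_(j | j != i) 1)); first exact: leq_sum.
rewrite sum1_card cardC1 prednK //; apply/card_gt0P; by exists i.
Qed.

Theorem lemma8 (V : finType) (G : rel V) (r : nat) (W : nat -> {set V})
    (k : nat) (C : nat -> 'I_k -> {set V}) :
  simple_graph G ->
  (forall s t, 1 <= s <= r -> 1 <= t <= r -> W s = W t -> s = t) ->
  (forall t, 1 <= t <= r ->
     is_clique (Gseq G W t.-1) (W t) /\ 2 <= #|W t|) ->
  0 < k ->
  (forall t, 1 <= t <= r ->
     #|W t| = k /\
     kpartite_classes (Gseq G W t.-1) (\bigcup_(1 <= i < t.+1) W i) (C t)) ->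
  forall t l (i : 'I_k), 1 <= t <= r -> 1 <= l <= t ->
    #|W l :&: C t i| = 1.
Proof.
move=> _ _ clique_W _ kpart t l i /andP [t_ge1 t_le_r] /andP [l_ge1 l_le_t].
have l_range : 1 <= l <= r by rewrite l_ge1 (leq_trans l_le_t t_le_r).
have [card_Wl _] := kpart l l_range.
have t_range : 1 <= t <= r by rewrite t_ge1.
have [cover_Ct _ stable_Ct] := (kpart t t_range).2.
have clique_Wl : is_clique (Gseq G W t.-1) (W l).
  apply: is_clique_subrel (clique_W l l_range).1.
  by apply: Gseq_subrel; rewrite -!subn1 leq_sub2r.
have Wl_sub_cover : W l \subset \bigcup_j C t j.
  rewrite cover_Ct; apply/subsetP => x xWl; rewrite (big_rem l) /= ?inE ?xWl //.
  by rewrite mem_index_iota l_ge1 ltnS.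
apply: (sum_le1_eq1 (F := fun j => #|W l :&: C t j|)) => [j|].
  exact: card_clique_stable_le1 (stable_Ct j).
by rewrite card_ord -{1}card_Wl card_le_sum_cover.
Qed.
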